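(* Let $\varphi$ be an endomorphism of $F_n$ and $K=\max\{|a\varphi|: a\in A\cup A^{-1}\}$. If $\varphi$ is almost length-increasing, then $|u\varphi|\geq|u|-K$ for every $u\in F_n$.
   Context: $F_n$ is the free group on a finite basis $A$; elements are reduced words over $A\cup A^{-1}$ and $|u|$ is the length; maps are written on the right. An endomorphism $\varphi$ is almost length-increasing if $|u\varphi|<|u|$ for only finitely many $u\in F_n$. *)

From mathcomp Require Import all_boot.
Set Implicit Arguments. Unset Strict Implicit. Unset Printing Implicit Defensive.

(* A letter is (a, true) = a
   or (a, false) = a^-1.  Elements of F_n are reduced words (seq of letters
   with no factor x x^-1); the length |u| is the size of the word. *)
Section FreeGroup.
Variable A : finType.

Definition letter := (A * bool)%type.
Definition word := seq letter.

Definition linv (x : letter) : letter := (x.1, ~~ x.2).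

Definition winv (u : word) : word := rev (map linv u).

Fixpoint reduced (u : word) : bool :=
  match u with
  | x :: ((y :: _) as t) => (y != linv x) && reduced t
  | _ => true
  end.

Definition reduce (u : word) : word :=
  foldr (fun x acc => match acc with
                      | y :: t => if y == linv x then t else x :: acc
                      | [::] => [:: x]
                      end) [::] u.

(* The endomorphism of F_n determined by the images g a (reduced words) of the
   basis elements a: u phi = reduce of the concatenation of the images of the
   letters of u (maps written on the right). *)
Definition limg (g : A -> word) (x : letter) : word :=
  if x.2 then g x.1 else winv (g x.1).

Definition endo (g : A -> word) (u : word) : word :=
  reduce (flatten (map (limg g) u)).

Definition Kmax (g : A -> word) : nat :=
  \max_(x : letter) size (endo g [:: x]).

Definition almost_length_increasing (g : A -> word) : Prop :=
  exists s : seq word, forall u : word,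
    reduced u -> size (endo g u) < size u -> u \in s.

End FreeGroup.

(* If [|w phi| < |w|] for a cyclically reduced [w], then all powers [w^k] are
   reduced and, by subadditivity of [|_ phi|], still satisfy
   [|w^k phi| <= k |w phi| < k |w| = |w^k|]: infinitely many exceptions.  So
   [phi] does not shorten cyclically reduced words.  An arbitrary reduced [u]
   becomes cyclically reduced after appending at most one letter [y], which
   costs at most [K] in [|u y phi| <= |u phi| + K]. *)

From mathcomp Require Import all_boot.
Set Implicit Arguments. Unset Strict Implicit. Unset Printing Implicit Defensive.

Lemma size_mem_le_sumn (T : eqType) (v : seq T) (s : seq (seq T)) :
  v \in s -> size v <= sumn (map size s).
Proof.
elim: s => //= w s IHs; rewrite in_cons => /predU1P[->|/IHs]; first exact: leq_addr.
by move/leq_trans; apply; apply: leq_addl.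
Qed.

Section FreeReduction.
Variable A : finType.
Implicit Types (x y : letter A) (w p q : word A).

Lemma linvK : involutive (@linv A).
Proof. by case=> a b; rewrite /linv /= negbK. Qed.

Lemma linv_inj : injective (@linv A).
Proof. exact: inv_inj linvK. Qed.

Lemma linv_neq x : linv x != x.
Proof. by case: x => a b; rewrite /linv /= xpair_eqE eqxx /=; case: b. Qed.

Definition redcons x w : word A :=
  if w is y :: t then (if y == linv x then t else x :: w) else [:: x].

Lemma reduceE w : reduce w = foldr redcons [::] w.
Proof. by []. Qed.

Lemma reduced_behead y w : reduced (y :: w) -> reduced w.
Proof. by case: w => //= z w /andP[]. Qed.

Lemma reduced_redcons x w : reduced w -> reduced (redcons x w).
Proof.
case: w => //= y t red_yt; case: ifP => y_linv_x //; first exact: reduced_behead red_yt.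
by rewrite /= y_linv_x.
Qed.

Lemma reduced_reduce w : reduced (reduce w).
Proof. by rewrite reduceE; elim: w => //= x w; apply: reduced_redcons. Qed.

Lemma redconsK x w : reduced w -> redcons x (redcons (linv x) w) = w.
Proof.
case: w => [|y t] /=; first by rewrite eqxx.
rewrite linvK; case: (eqVneq y x) => [->|y_neq_x] red_yt; last by rewrite /= eqxx.
by case: t red_yt => //= z t /andP[z_neq _]; rewrite (negbTE z_neq).
Qed.

Lemma foldr_redcons_reduce c w :
  reduced c -> foldr redcons c w = foldr redcons c (reduce w).
Proof.
move=> red_c; elim: w => //= x w ->; set r := reduce w.
case: r => // y t /=; case: (eqVneq y (linv x)) => [->|] //=.
have red_t : reduced (foldr redcons c t) by elim: t => //= z t; apply: reduced_redcons.
by rewrite redconsK.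
Qed.

Lemma reduce_cat p q : reduce (p ++ q) = foldr redcons (reduce q) (reduce p).
Proof. by rewrite reduceE foldr_cat -reduceE -foldr_redcons_reduce ?reduced_reduce. Qed.

Lemma size_foldr_redcons c w : size (foldr redcons c w) <= size w + size c.
Proof.
have size_redcons x r : size (redcons x r) <= (size r).+1.
  by case: r => //= y t; case: ifP => //= _; apply: leqW.
by elim: w => //= x w IHw; apply: leq_trans (size_redcons _ _) _; rewrite ltnS.
Qed.

Lemma size_reduce_cat p q : size (reduce (p ++ q)) <= size (reduce p) + size (reduce q).
Proof. by rewrite reduce_cat size_foldr_redcons. Qed.

Lemma reduced_cat x p y q :
  reduced (x :: p) -> reduced (y :: q) -> y != linv (last x p) ->
  reduced (x :: p ++ y :: q).
Proof.
elim: p x => [|z p IHp] x; first by move=> /= _ -> ->.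
move=> /andP[z_neq red_zp] red_yq y_neq.
by rewrite -[reduced _]/((z != linv x) && reduced (z :: p ++ y :: q)) z_neq IHp.
Qed.

Lemma last_reduced_two_letters x t :
  (forall y, y = x \/ y = linv x) -> reduced (x :: t) -> last x t = x.
Proof.
move=> two_letters; elim: t x two_letters => // z t IHt x two_letters /andP[z_neq red_zt].
have z_eq : z = x by case: (two_letters z) => // z_eq; rewrite z_eq eqxx in z_neq.
by subst z; apply: IHt.
Qed.

Definition cyclically_reduced w :=
  if w is x :: p then reduced w && (x != linv (last x p)) else true.

Definition wpow w k : word A := flatten (nseq k w).

Lemma size_wpow w k : size (wpow w k) = k * size w.
Proof. by elim: k => //= k IHk; rewrite size_cat IHk mulSn. Qed.

Lemma reduced_wpow w k : cyclically_reduced w -> reduced (wpow w k).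
Proof.
case: w => [|x p] /=; first by rewrite /wpow; elim: k.
move=> /andP[red_w cyc_w].
suff red_w_wpow k' : reduced ((x :: p) ++ wpow (x :: p) k') by case: k.
by elim: k' => [|k' IHk]; [rewrite cats0 | exact: reduced_cat red_w IHk cyc_w].
Qed.

Lemma cyclically_reduced_extension u :
  reduced u -> exists2 t : word A, size t <= 1 & cyclically_reduced (u ++ t).
Proof.
case: u => [|f p] red_u; first by exists [::].
set l := last f p.
case: (eqVneq f (linv l)) => [f_eq|f_neq]; last by exists [::]; rewrite // cats0; apply/andP.
case: (pickP (fun y => (y != l) && (y != linv l))) => [y /andP[y_neq_l y_neq_linv]|none].
  exists [:: y] => //; apply/andP; split; first by apply: reduced_cat; rewrite /= ?andbT.
  by rewrite last_cat /= f_eq; apply: contra y_neq_l => /eqP/linv_inj->.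
(* Over a one-letter basis no third letter [y] exists, and then [u] is a
   power of [f], contradicting [f = linv l]. *)
have two_letters y : y = f \/ y = linv f.
  move: (none y); rewrite f_eq linvK.
  by case: (eqVneq y l) => [|_ /negbT]; [right | rewrite negbK => /eqP; left].
have := last_reduced_two_letters two_letters red_u; rewrite -/l => l_eq.
by move: f_eq; rewrite l_eq => /eqP; rewrite eq_sym (negbTE (linv_neq f)).
Qed.

End FreeReduction.

Section Endomorphism.
Variables (A : finType) (g : A -> word A).
Implicit Types (w u v : word A).

Lemma size_endo_cat u v : size (endo g (u ++ v)) <= size (endo g u) + size (endo g v).
Proof. by rewrite /endo map_cat flatten_cat size_reduce_cat. Qed.

Lemma size_endo_le w : size (endo g w) <= size w * Kmax g.
Proof.
elim: w => // x w IHw; rewrite -cat1s mulSn.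
apply: leq_trans (size_endo_cat _ _) (leq_add _ IHw).
exact: (@leq_bigmax _ (fun y => size (endo g [:: y])) x).
Qed.

Lemma size_endo_wpow w k : size (endo g (wpow w k)) <= k * size (endo g w).
Proof.
elim: k => // k IHk; rewrite mulSn.
by apply: leq_trans (size_endo_cat _ _) _; rewrite leq_add2l.
Qed.

Lemma almost_length_increasing_cyclically_reduced w :
  almost_length_increasing g -> cyclically_reduced w -> size w <= size (endo g w).
Proof.
move=> [s exceptions] cyc_w; rewrite leqNgt; apply/negP => shorter.
set k := (sumn (map size s)).+1.
have shorter_pow : size (endo g (wpow w k)) < size (wpow w k).
  by apply: leq_ltn_trans (size_endo_wpow w k) _; rewrite size_wpow ltn_pmul2l.
have := size_mem_le_sumn (exceptions _ (reduced_wpow k cyc_w) shorter_pow).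
rewrite size_wpow leqNgt => /negP; apply.
by apply: leq_pmulr; apply: leq_ltn_trans shorter.
Qed.

End Endomorphism.

Theorem mainTheorem12 (A : finType) (g : A -> word A) :
  (forall a : A, reduced (g a)) ->
  almost_length_increasing g ->
  forall u : word A, reduced u -> size u <= size (endo g u) + Kmax g.
Proof.
(* The images [g a] need not be reduced: [endo] reduces anyway. *)
move=> _ ali u red_u.
have [t size_t cyc_ut] := cyclically_reduced_extension red_u.
have ut_long := almost_length_increasing_cyclically_reduced ali cyc_ut.
have endo_ut_short : size (endo g (u ++ t)) <= size (endo g u) + Kmax g.
  apply: leq_trans (size_endo_cat g u t) _; rewrite leq_add2l.
  by apply: leq_trans (size_endo_le g t) _; rewrite -[leqRHS]mul1n leq_mul.
by apply: leq_trans endo_ut_short; apply: leq_trans ut_long; rewrite size_cat leq_addr.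
Qed.
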